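(* There exists a two-way optical interference automaton (2OIA) that recognizes the language $L_{centre}=\{w_1 a w_2 \mid w_1,w_2\in\{a,b\}^*,\ |w_1|=|w_2|\}$ in time linear in the length of the input string.
   Context: A two-way optical interference automaton (2OIA) is a deterministic machine with finite state set $Q$, start state $q_0$, accepting and rejecting states, finite input alphabet $\Sigma$, and tape alphabet $\Gamma=\Sigma\cup\{\text{¢},\$\}$. On input $w=w_1\cdots w_n$ the read-only tape holds ¢$w_1\cdots w_n\$$ in cells $0,1,\dots,n+1$, scanned by a two-way head. For each cell $m$ there is a monochromatic point light source at the point $(m,0)$ of the plane; all sources have the same wavelength $\lambda$ and the same initial amplitude $A_0$, and each source is at any moment either switched off or switched on with initial phase $0$ or $\pi$. A detector is located at a grid point $(j,k)$ with $j,k\in\{0,\tfrac12,1,\tfrac32,\dots,n+1\}$, pointing towards the source array; its field of vision is the cone making angle $\pi/4$ with the vertical line through it, so it sees exactly the sources at $(m,0)$ with $|m-j|\le k$. The resultant wave at the detector is $\sum A_0 r_m^{-1}e^{i(\phi_m+2\pi r_m/\lambda)}$, summed over the switched-on sources it sees, where $r_m$ is the distance from the source to the detector and $\phi_m\in\{0,\pi\}$ the source's phase; the detector outputs $\underline{1}$ if this resultant (equivalently the intensity) is nonzero and $\underline{0}$ otherwise. The transition function $\delta:Q\times\Gamma\times\{\underline0,\underline1\}\to Q\times\{\text{left},\text{right},\text{stay}\}\times\{\text{left},\text{right},\text{up},\text{down},\text{stay}\}\times\{\mathrm{toggle}(0),\mathrm{toggle}(\pi),-\}$ maps (state, scanned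 symbol, detector output) to a new state, a move of the head by one cell, a move of the detector by one grid step (of length $1/2$), and an action on the source of the currently scanned cell: $\mathrm{toggle}(\phi)$ switches it on with phase $\phi$ if it is off and switches it off if it is on; $-$ does nothing. Initially all sources are off, the machine is in $q_0$, the head is on cell $0$, and the detector is at a prescribed initial grid position. For a given source, a maximal sequence of toggles at consecutive time steps is called non-transient if its length is odd; there is a constant $k$ such that the machine crashes if it attempts a non-transient toggle sequence on a single source for the $(k+1)$-th time. The machine accepts when it is in an accepting state with detector output $\underline0$. Its running time is the total number of moves made by the head plus the number of moves made by the detector. A 2OIA recognizes a language $L$ if it accepts every input in $L$ and rejects every input not in $L$. *)

From Stdlib Require Import Reals List Arith Bool.
Import ListNotations.

Inductive tsym (S : Type) : Type :=
| LEnd : tsym S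
| REnd : tsym S
| Sym  : S -> tsym S.
Arguments LEnd {S}. Arguments REnd {S}. Arguments Sym {S} _.

Inductive hmove := HLeft | HRight | HStay.
Inductive dmove := DLeft | DRight | DUp | DDown | DStay.
Inductive tact := Tog0 | TogPi | NoAct.

(** A 2OIA over input alphabet S.  The detector output is a bool
    (false = 0, true = 1).  Detector positions are stored in half-units:
    (dj, dk) denotes the grid point (dj/2, dk/2). *)
Record OIA (S : Type) : Type := {
  st : Type;
  st_finite : exists l : list st, forall q, In q l;
  q0 : st;
  accepting : st -> bool;
  rejecting : st -> bool;
  acc_rej_disj : forall q, accepting q = true -> rejecting q = false;
  delta : st -> tsym S -> bool -> st * hmove * dmove * tact;
  det_init : nat * nat;
  kbound : nat                (* the constant k of the non-transient toggle rule *)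
}.
Arguments st {S} _. Arguments q0 {S} _. Arguments accepting {S} _.
Arguments rejecting {S} _. Arguments delta {S} _. Arguments det_init {S} _.
Arguments kbound {S} _.

(** Configurations.  [src m] : None = off, Some false = on with phase 0,
    Some true = on with phase pi.  [cnt m] = number of completed
    non-transient toggle sequences on source m.  [run] = the source whose
    toggle sequence is currently in progress (toggled at the previous step),
    together with the parity of its length (true = odd).
    [tm] = running time so far (head moves + detector moves). *)
Record cfg (Q : Type) : Type := mkcfg {
  cq : Q; hp : nat; dj : nat; dk : nat;
  src : nat -> option bool;
  cnt : nat -> nat;
  run : option (nat * bool);
  tm : nat
}.
Arguments mkcfg {Q} _ _ _ _ _ _ _ _.
Arguments cq {Q} _. Arguments hp {Q} _. Arguments dj {Q} _. Arguments dk {Q} _.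
Arguments src {Q} _. Arguments cnt {Q} _. Arguments run {Q} _. Arguments tm {Q} _.

Definition init_cfg {S} (M : OIA S) : cfg (st M) :=
  mkcfg (q0 M) 0 (fst (det_init M)) (snd (det_init M))
        (fun _ => None) (fun _ => 0) None 0.

Definition tape_at {S} (w : list S) (h : nat) : tsym S :=
  match h with
  | 0 => LEnd
  | S h' => match nth_error w h' with Some s => Sym s | None => REnd end
  end.

Open Scope R_scope.

Definition Rsum_list (l : list R) : R := fold_right Rplus 0 l.

(** Detector at half-unit position (j2,k2) sees source m iff |m - j| <= k. *)
Definition sees (j2 k2 m : nat) : bool :=
  ((2 * m <=? j2 + k2) && (j2 <=? 2 * m + k2))%nat.

(** distance from source (m,0) to detector (j2/2, k2/2) *)
Definition dist (j2 k2 m : nat) : R :=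
  sqrt ((INR m - INR j2 / 2) ^ 2 + (INR k2 / 2) ^ 2).

Definition phase (b : bool) : R := if b then PI else 0.

(** Real and imaginary parts of the resultant wave
    sum A0 r_m^{-1} e^{i(phi_m + 2 pi r_m / lambda)} over switched-on seen
    sources m in 0 .. n+1. *)
Definition resultant_part (trig : R -> R) (lam A0 : R) (n j2 k2 : nat)
    (s : nat -> option bool) : R :=
  Rsum_list (map (fun m =>
     match s m with
     | Some ph => if sees j2 k2 m
                  then A0 / dist j2 k2 m * trig (phase ph + 2 * PI * dist j2 k2 m / lam)
                  else 0
     | None => 0
     end) (seq 0 (n + 2))).

(** Some switched-on seen source sits exactly at the detector (r = 0):
    the resultant is then infinite, hence nonzero. *)
Definition source_at_detector (n j2 k2 : nat) (s : nat -> option bool) : bool :=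
  existsb (fun m => match s m with
                    | Some _ => ((k2 =? 0) && (j2 =? 2 * m))%nat
                    | None => false end) (seq 0 (n + 2)).

Definition detector_output (lam A0 : R) (n j2 k2 : nat) (s : nat -> option bool) : bool :=
  if source_at_detector n j2 k2 s then true else
  if Req_EM_T (resultant_part cos lam A0 n j2 k2 s) 0 then
    if Req_EM_T (resultant_part sin lam A0 n j2 k2 s) 0 then false else true
  else true.

Close Scope R_scope.

Definition output_of {S} (M : OIA S) (lam A0 : R) (w : list S) (c : cfg (st M)) : bool :=
  detector_output lam A0 (length w) (dj c) (dk c) (src c).

(** Closing a toggle run: an odd-length (non-transient) maximal run increases
    the counter of its source; exceeding k is a crash (None). *)
Definition close_run (k : nat) (r : option (nat * bool)) (cn : nat -> nat)
    : option (nat -> nat) :=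
  match r with
  | Some (m, true) =>
      if (k <? S (cn m))%nat then None
      else Some (fun x => if Nat.eqb x m then S (cn m) else cn x)
  | _ => Some cn
  end.

Inductive res (Q : Type) : Type :=
| Cont : cfg Q -> res Q
| Stop : bool -> nat -> res Q.    (* verdict (true = accept), running time *)
Arguments Cont {Q} _. Arguments Stop {Q} _ _.

Definition move_head (n h : nat) (m : hmove) : option nat :=
  match m with
  | HLeft => match h with 0 => None | S h' => Some h' end
  | HRight => if (h <? n + 1)%nat then Some (S h) else None
  | HStay => Some h
  end.

Definition move_det (n j2 k2 : nat) (m : dmove) : option (nat * nat) :=
  match m with
  | DLeft => match j2 with 0 => None | S j' => Some (j', k2) end
  | DRight => if (j2 <? 2 * (n + 1))%nat then Some (S j2, k2) else None
  | DUp => if (k2 <? 2 * (n + 1))%nat then Some (j2, S k2) else None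
  | DDown => match k2 with 0 => None | S k' => Some (j2, k') end
  | DStay => Some (j2, k2)
  end.

Definition hcost (m : hmove) : nat := match m with HStay => 0 | _ => 1 end.
Definition dcost (m : dmove) : nat := match m with DStay => 0 | _ => 1 end.

(** In a halting (accepting/rejecting) state the machine stops:
    any toggle run still in progress is closed (possibly crashing), and it
    accepts iff the state is accepting and the detector output is 0.
    Crashes (illegal moves, (k+1)-th non-transient toggle sequence) reject. *)
Definition step {S} (M : OIA S) (lam A0 : R) (w : list S) (c : cfg (st M))
    : res (st M) :=
  let n := length w in
  if accepting M (cq c) || rejecting M (cq c) then
    match close_run (kbound M) (run c) (cnt c) with
    | None => Stop false (tm c)
    | Some _ => Stop (accepting M (cq c) && negb (output_of M lam A0 w c)) (tm c)
    end
  else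
  let '(q', hm, dmv, ta) := delta M (cq c) (tape_at w (hp c)) (output_of M lam A0 w c) in
  match move_head n (hp c) hm, move_det n (dj c) (dk c) dmv with
  | Some h', Some (j', k') =>
      let t' := (tm c + hcost hm + dcost dmv)%nat in
      match ta with
      | NoAct =>
          match close_run (kbound M) (run c) (cnt c) with
          | None => Stop false t'
          | Some cn' => Cont (mkcfg q' h' j' k' (src c) cn' None t')
          end
      | Tog0 | TogPi =>
          let h := hp c in
          let s' := fun x => if Nat.eqb x h then
                      match src c h with
                      | None => Some (match ta with TogPi => true | _ => false end)
                      | Some _ => None
                      end else src c x in
          match run c with
          | Some (m, p) =>
              if Nat.eqb m h then Cont (mkcfg q' h' j' k' s' (cnt c) (Some (h, negb p)) t')
              else match close_run (kbound M) (run c) (cnt c) with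
                   | None => Stop false t'
                   | Some cn' => Cont (mkcfg q' h' j' k' s' cn' (Some (h, true)) t')
                   end
          | None => Cont (mkcfg q' h' j' k' s' (cnt c) (Some (h, true)) t')
          end
      end
  | _, _ => Stop false (tm c + hcost hm + dcost dmv)
  end.

Fixpoint exec {S} (M : OIA S) (lam A0 : R) (w : list S) (fuel : nat) (c : cfg (st M))
    : res (st M) :=
  match fuel with
  | 0 => Cont c
  | S f => match step M lam A0 w c with
           | Cont c' => exec M lam A0 w f c'
           | r => r
           end
  end.

Definition recognizes_in_linear_time {S} (M : OIA S) (lam A0 : R)
    (L : list S -> Prop) : Prop :=
  exists C : nat, forall w : list S,
    exists (fuel : nat) (b : bool) (t : nat),
      exec M lam A0 w fuel (init_cfg M) = Stop b t /\
      (b = true <-> L w) /\ (t <= C * (length w + 1))%nat.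

Inductive ab := a | b.

Definition L_centre (w : list ab) : Prop :=
  exists w1 w2 : list ab, w = w1 ++ a :: w2 /\ length w1 = length w2.

(* Light the source of cell 0 once and keep the detector at height 0: there it
   sees only the source directly below it, so its output is 1 exactly when it
   sits at the origin, and its horizontal position (in half-units) becomes a
   counter with a zero test.  Head and detector walk together to the right end
   marker, at position n+1; then the head steps left once for every two
   half-steps of the detector.  If n+1 = 2m, the detector reaches the origin
   at the start of a round, after m rounds, with the head on the middle cell
   m; if n+1 is odd it reaches the origin in mid-round and the machine
   rejects.  The run takes O(n) moves and a single toggle. *)

From Pilot Require Import Defs.
From Stdlib Require Import Reals Lra Lia List Arith Bool.
Import ListNotations.

Lemma Rsum_list_map_zero {A : Type} (f : A -> R) (l : list A) :
  (forall x, In x l -> f x = 0%R) -> Rsum_list (map f l) = 0%R.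
Proof.
  induction l as [|x l IH]; intros Hf; simpl; [reflexivity|].
  rewrite Hf, IH; [lra | intros y Hy; apply Hf; right; exact Hy | left; reflexivity].
Qed.

Lemma sees_on_axis j2 m : sees j2 0 m = true -> j2 = (2 * m)%nat.
Proof. unfold sees; rewrite andb_true_iff, !Nat.leb_le; lia. Qed.

Lemma detector_output_on_axis lam A0 n j2 s :
  detector_output lam A0 n j2 0 s = source_at_detector n j2 0 s.
Proof.
  unfold detector_output.
  destruct (source_at_detector n j2 0 s) eqn:Hlit; [reflexivity|].
  assert (Hdark : forall trig, resultant_part trig lam A0 n j2 0 s = 0%R).
  { intros trig; apply Rsum_list_map_zero; intros m Hm.
    destruct (s m) as [ph|] eqn:Hs; [|reflexivity].
    destruct (sees j2 0 m) eqn:Hsee; [|reflexivity].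
    exfalso; apply sees_on_axis in Hsee.
    assert (Hlit' : source_at_detector n j2 0 s = true).
    { apply existsb_exists; exists m; split; [exact Hm|].
      rewrite Hs, Hsee, !Nat.eqb_refl; reflexivity. }
    congruence. }
  rewrite !Hdark; destruct (Req_EM_T 0 0); [reflexivity|congruence].
Qed.

Definition lone_source : nat -> option bool :=
  fun m => if m =? 0 then Some false else None.

Lemma source_at_detector_lone n j2 :
  source_at_detector n j2 0 lone_source = (j2 =? 0).
Proof.
  unfold source_at_detector; rewrite Nat.add_comm; cbn -[Nat.mul].
  destruct (existsb _ (seq 2 n)) eqn:Hrest.
  - apply existsb_exists in Hrest as (m & Hm & Hlit); apply in_seq in Hm.
    unfold lone_source in Hlit; destruct (Nat.eqb_spec m 0); [lia|discriminate].
  - rewrite orb_false_r; reflexivity.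
Qed.

Definition halts_in {Sg} (M : OIA Sg) lam A0 w (c : cfg (st M)) (b : bool) (t : nat) :=
  exists fuel, exec M lam A0 w fuel c = Stop b t.

Lemma halts_in_step_cont {Sg} {M : OIA Sg} {lam A0 w c c' b t} :
  step M lam A0 w c = Cont c' -> halts_in M lam A0 w c' b t -> halts_in M lam A0 w c b t.
Proof. intros Hstep [fuel Hrun]; exists (S fuel); simpl; rewrite Hstep; exact Hrun. Qed.

Lemma halts_in_step_stop {Sg} {M : OIA Sg} {lam A0 w c b t} :
  step M lam A0 w c = Stop b t -> halts_in M lam A0 w c b t.
Proof. intros Hstep; exists 1%nat; simpl; rewrite Hstep; reflexivity. Qed.

Lemma L_centre_iff w :
  L_centre w <-> exists k, length w = (2 * k + 1)%nat /\ nth_error w k = Some a.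
Proof.
  split.
  - intros (w1 & w2 & -> & Hlen); exists (length w1); split.
    + rewrite length_app; simpl; lia.
    + rewrite nth_error_app2, Nat.sub_diag by lia; reflexivity.
  - intros (k & Hlen & Hk).
    destruct (nth_error_split w k Hk) as (w1 & w2 & -> & Hw1).
    exists w1, w2; split; [reflexivity|].
    rewrite length_app in Hlen; simpl in Hlen; lia.
Qed.

Inductive centre_state := Start | Scan | CountA | CountB | Accept | Reject.

Definition centre_delta (q : centre_state) (s : tsym ab) (lit : bool)
    : centre_state * hmove * dmove * tact :=
  match q with
  | Start => (Scan, HStay, DStay, Tog0)
  | Scan => match s with
            | REnd => (CountA, HStay, DStay, NoAct)
            | _ => (Scan, HRight, DRight, NoAct)
            end
  | CountA =>
      if lit then
        match s with
        (* acceptance needs a dark detector, so it steps off the source *)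
        | Sym a => (Accept, HStay, DRight, NoAct)
        | _ => (Reject, HStay, DStay, NoAct)
        end
      else (CountB, HLeft, DLeft, NoAct)
  | CountB => if lit then (Reject, HStay, DStay, NoAct) else (CountA, HStay, DLeft, NoAct)
  | Accept => (Accept, HStay, DStay, NoAct)
  | Reject => (Reject, HStay, DStay, NoAct)
  end.

Definition is_accept q := match q with Accept => true | _ => false end.
Definition is_reject q := match q with Reject => true | _ => false end.

Lemma centre_state_finite : exists l : list centre_state, forall q, In q l.
Proof. exists [Start; Scan; CountA; CountB; Accept; Reject]; destruct q; simpl; tauto. Qed.

Lemma is_accept_not_reject q : is_accept q = true -> is_reject q = false.
Proof. destruct q; simpl; congruence. Qed.

Definition centre_oia : OIA ab := {|
  st := centre_state; st_finite := centre_state_finite; q0 := Start;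
  accepting := is_accept; rejecting := is_reject; acc_rej_disj := is_accept_not_reject;
  delta := centre_delta; det_init := (0%nat, 0%nat); kbound := 1%nat |}.

Definition is_a (s : tsym ab) : bool := match s with Sym a => true | _ => false end.

Section Run.
Variables (lam A0 : R) (w : list ab).
Notation n := (length w).
Notation step := (step centre_oia lam A0 w).
Notation halts_in := (halts_in centre_oia lam A0 w).

(* Every configuration from the second step on: source 0 lit, its toggle run
   closed and counted, detector on the axis. *)
Definition cfg_at (q : centre_state) (h j2 t : nat) : cfg centre_state :=
  mkcfg q h j2 0 lone_source (fun m => if m =? 0 then 1 else 0)%nat None t.

Lemma output_cfg_at q h j2 t :
  output_of centre_oia lam A0 w (cfg_at q h j2 t) = (j2 =? 0).
Proof.
  unfold output_of; simpl.
  rewrite detector_output_on_axis; apply source_at_detector_lone.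
Qed.

Ltac simpl_step := unfold Defs.step; cbn -[output_of Nat.ltb];
  rewrite ?output_cfg_at; cbn -[Nat.ltb].

Lemma step_start :
  step (init_cfg centre_oia)
  = Cont (mkcfg Scan 0 0 0 lone_source (fun _ => 0%nat) (Some (0%nat, true)) 0).
Proof. reflexivity. Qed.

Lemma step_scan_left_end :
  step (mkcfg Scan 0 0 0 lone_source (fun _ => 0%nat) (Some (0%nat, true)) 0)
  = Cont (cfg_at Scan 1 1 2).
Proof. simpl_step; rewrite !(proj2 (Nat.ltb_lt 0 _)) by lia; reflexivity. Qed.

Lemma step_scan h x t :
  nth_error w h = Some x ->
  step (cfg_at Scan (S h) (S h) t) = Cont (cfg_at Scan (S (S h)) (S (S h)) (t + 2)).
Proof.
  intros Hx; assert (Hh : (h < n)%nat) by (apply nth_error_Some; congruence).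
  simpl_step; rewrite Hx; cbn -[Nat.ltb].
  rewrite !(proj2 (Nat.ltb_lt _ _)) by lia.
  unfold cfg_at; do 2 f_equal; lia.
Qed.

Lemma step_scan_right_end t :
  step (cfg_at Scan (S n) (S n) t) = Cont (cfg_at CountA (S n) (S n) t).
Proof.
  simpl_step; rewrite (proj2 (nth_error_None w n)) by lia; cbn.
  unfold cfg_at; do 2 f_equal; lia.
Qed.

Lemma step_countA h j2 t :
  step (cfg_at CountA (S h) (S j2) t) = Cont (cfg_at CountB h j2 (t + 2)).
Proof. simpl_step; unfold cfg_at; do 2 f_equal; lia. Qed.

Lemma step_countB h j2 t :
  step (cfg_at CountB h (S j2) t) = Cont (cfg_at CountA h j2 (t + 1)).
Proof. simpl_step; unfold cfg_at; do 2 f_equal; lia. Qed.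

Lemma step_countA_lit h t :
  step (cfg_at CountA h 0 t)
  = Cont (if is_a (tape_at w h) then cfg_at Accept h 1 (t + 1) else cfg_at Reject h 0 t).
Proof.
  unfold Defs.step; cbn -[output_of tape_at]; rewrite output_cfg_at; cbn -[tape_at].
  destruct (tape_at w h) as [| |[|]]; cbn -[Nat.ltb];
    rewrite ?(proj2 (Nat.ltb_lt 0 _)) by lia; unfold cfg_at; do 2 f_equal; lia.
Qed.

Lemma step_countB_lit h t : step (cfg_at CountB h 0 t) = Cont (cfg_at Reject h 0 t).
Proof. simpl_step; unfold cfg_at; do 2 f_equal; lia. Qed.

Lemma step_accept h j2 t : step (cfg_at Accept h (S j2) t) = Stop true t.
Proof. simpl_step; reflexivity. Qed.

Lemma step_reject h j2 t : step (cfg_at Reject h j2 t) = Stop false t.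
Proof. simpl_step; reflexivity. Qed.

Lemma halts_scan k h t b t' :
  (1 <= h)%nat -> (h + k = S n)%nat ->
  halts_in (cfg_at CountA (S n) (S n) (t + 2 * k)) b t' ->
  halts_in (cfg_at Scan h h t) b t'.
Proof.
  revert h t; induction k as [|k IH]; intros h t Hh Hk Hhalt.
  - replace h with (S n) by lia; rewrite Nat.add_0_r in Hhalt.
    exact (halts_in_step_cont (step_scan_right_end t) Hhalt).
  - destruct h as [|h]; [lia|].
    destruct (nth_error w h) as [x|] eqn:Hx;
      [|apply nth_error_None in Hx; lia].
    apply (halts_in_step_cont (step_scan h x t Hx)).
    apply IH; [lia|lia|].
    replace (t + 2 + 2 * k)%nat with (t + 2 * S k)%nat by lia; exact Hhalt.
Qed.

Lemma halts_countdown m h e t b t' :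
  halts_in (cfg_at CountA h e (t + 3 * m)) b t' ->
  halts_in (cfg_at CountA (m + h) (2 * m + e) t) b t'.
Proof.
  revert t; induction m as [|m IH]; intros t Hhalt.
  - rewrite Nat.add_0_r in Hhalt; exact Hhalt.
  - replace (2 * S m + e)%nat with (S (S (2 * m + e))) by lia.
    apply (halts_in_step_cont (step_countA _ _ t)).
    apply (halts_in_step_cont (step_countB _ _ _)).
    apply IH; replace (t + 2 + 1 + 3 * m)%nat with (t + 3 * S m)%nat by lia.
    exact Hhalt.
Qed.

Lemma halts_centre_found h t :
  exists t', (t' <= t + 1)%nat /\ halts_in (cfg_at CountA h 0 t) (is_a (tape_at w h)) t'.
Proof.
  pose proof (step_countA_lit h t) as Hstep.
  destruct (is_a (tape_at w h)).
  - exists (t + 1)%nat; split; [lia|].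
    exact (halts_in_step_cont Hstep
             (halts_in_step_stop (step_accept h 0 _))).
  - exists t; split; [lia|].
    exact (halts_in_step_cont Hstep
             (halts_in_step_stop (step_reject h 0 _))).
Qed.

Lemma halts_centre_missed h t : halts_in (cfg_at CountA (S h) 1 t) false (t + 2).
Proof.
  apply (halts_in_step_cont (step_countA _ _ t)).
  apply (halts_in_step_cont (step_countB_lit _ _)).
  exact (halts_in_step_stop (step_reject _ _ _)).
Qed.

Lemma halts_from_right_end b t :
  halts_in (cfg_at CountA (S n) (S n) (2 + 2 * n)) b t ->
  halts_in (init_cfg centre_oia) b t.
Proof.
  intros Hhalt.
  apply (halts_in_step_cont step_start).
  apply (halts_in_step_cont step_scan_left_end).
  exact (halts_scan n 1 2 b t ltac:(lia) ltac:(lia) Hhalt).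
Qed.

Lemma centre_oia_decides :
  exists b t, halts_in (init_cfg centre_oia) b t /\
    (b = true <-> L_centre w) /\ (t <= 6 * (n + 1))%nat.
Proof.
  destruct (Nat.Even_or_Odd (S n)) as [[m Hm] | [m Hm]].
  - destruct m as [|k]; [lia|].
    destruct (halts_centre_found (S k) (2 + 2 * n + 3 * S k)) as (t & Ht & Hhalt).
    exists (is_a (tape_at w (S k))), t; split; [|split; [|lia]].
    + apply halts_from_right_end.
      replace (cfg_at CountA (S n) (S n) _)
        with (cfg_at CountA (S k + S k) (2 * S k + 0) (2 + 2 * n)) by (f_equal; lia).
      exact (halts_countdown _ _ _ _ _ _ Hhalt).
    + rewrite L_centre_iff; cbn [tape_at]; split.
      * destruct (nth_error w k) as [[|]|] eqn:Hk; try discriminate.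
        intros _; exists k; split; [lia | exact Hk].
      * intros (k' & Hk' & Hk); replace k' with k in Hk by lia; rewrite Hk; reflexivity.
  - exists false, (2 + 2 * n + 3 * m + 2)%nat; split; [|split; [|lia]].
    + apply halts_from_right_end.
      replace (cfg_at CountA (S n) (S n) _)
        with (cfg_at CountA (m + S m) (2 * m + 1) (2 + 2 * n)) by (f_equal; lia).
      exact (halts_countdown _ _ _ _ _ _ (halts_centre_missed _ _)).
    + rewrite L_centre_iff; split; [discriminate | intros (k & Hk & _); lia].
Qed.

End Run.

Theorem theorem1 :
  forall lam A0 : R, (0 < lam)%R -> (0 < A0)%R ->
  exists M : OIA ab, recognizes_in_linear_time M lam A0 L_centre.
Proof.
  intros lam A0 _ _; exists centre_oia, 6%nat; intros w.
  destruct (centre_oia_decides lam A0 w) as (b & t & [fuel Hrun] & Hb & Ht).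
  exists fuel, b, t; auto.
Qed.
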